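(* Let $T$ be an ergodic probability preserving transformation of a probability space $(X,\mathcal B,m)$, let $G$ be an Abelian locally compact second countable group, and let $\varphi:X\to G$ be measurable with $T_\varphi(x,y)=(Tx,\varphi(x)+y)$ ergodic on $(X\times G,m\times m_G)$. Then there is a surjective semigroup homomorphism $\pi_\varphi:\mathcal L_\varphi\to\mathcal E_\varphi$ such that whenever $Q(x,y)=(Sx,f(x)+w(y))$ (with $S$ a commutor of $T$, $f:X\to G$ measurable, $w$ a surjective continuous endomorphism of $G$) is a commutor of $T_\varphi$, then $w=\pi_\varphi(S)$.
   Context: A commutor of a non-singular transformation $R$ is a non-singular transformation commuting with $R$. $\mathcal L_\varphi$ is the set of commutors $S$ of $T$ for which there exist a surjective continuous group endomorphism $w$ of $G$ and measurable $f:X\to G$ such that $(x,y)\mapsto(Sx,f(x)+w(y))$ is a commutor of $T_\varphi$; $\mathcal E_\varphi$ is the set of all such $w$ (both are semigroups under composition). $m_G$ is Haar measure. *)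

From HB Require Import structures.
From mathcomp Require Import all_boot all_order all_algebra.
From mathcomp Require Import all_classical all_reals all_analysis.
Set Implicit Arguments. Unset Strict Implicit. Unset Printing Implicit Defensive.
Import Order.TTheory GRing.Theory Num.Theory.
Local Open Scope classical_set_scope.
Local Open Scope ring_scope.

(* The Borel measurable space of a topological abelian group G:
   the carrier is G itself (pointed by 0, as g_sigma_algebraType requires a
   pointed type), the sigma-algebra is generated by the open sets of G. *)
Definition pointed_carrier (G : topologicalZmodType) : Type := G.
HB.instance Definition _ (G : topologicalZmodType) :=
  Choice.on (pointed_carrier G).
HB.instance Definition _ (G : topologicalZmodType) :=
  isPointed.Build (pointed_carrier G) (0 : G).
Notation borel G := (@g_sigma_algebraType (pointed_carrier G) (@open G)).

Section Defs.
Context {R : realType}.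
Local Open Scope ereal_scope.

Definition haar_measure (G : topologicalZmodType) (mG : set (borel G) -> \bar R)
  : Prop :=
  [/\ (forall (x : G) (A : set (borel G)), measurable A ->
         mG [set ((x : G) + (a : G))%R | a in A] = mG A),
      (forall K : set G, compact K -> mG K < +oo) &
      (forall U : set G, open U -> U !=set0 -> 0 < mG U)].

Definition measure_preserving d (Y : measurableType d) (mu : set Y -> \bar R)
  (S : Y -> Y) : Prop :=
  measurable_fun setT S /\ forall A, measurable A -> mu (S @^-1` A) = mu A.

Definition nonsingular d (Y : measurableType d) (mu : set Y -> \bar R)
  (S : Y -> Y) : Prop :=
  measurable_fun setT S /\
  forall A, measurable A -> (mu (S @^-1` A) = 0 <-> mu A = 0).

Definition ergodic d (Y : measurableType d) (mu : set Y -> \bar R)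
  (S : Y -> Y) : Prop :=
  forall A, measurable A -> S @^-1` A = A -> mu A = 0 \/ mu (~` A) = 0.

Definition commutor d (Y : measurableType d) (mu : {measure set Y -> \bar R})
  (Rt S : Y -> Y) : Prop :=
  nonsingular mu S /\ {ae mu, forall y, S (Rt y) = Rt (S y)}.

End Defs.

Definition skew_product (X : Type) (G : zmodType) (T : X -> X) (phi : X -> G)
  : X * G -> X * G := fun xy => (T xy.1, (phi xy.1 + xy.2)%R).

Definition lift_map (X : Type) (G : zmodType) (S : X -> X) (f : X -> G)
  (w : G -> G) : X * G -> X * G := fun xy => (S xy.1, (f xy.1 + w xy.2)%R).

Definition surj_cont_endo (G : topologicalZmodType) (w : G -> G) : Prop :=
  [/\ {morph w : a b / (a + b)%R}, continuous w & forall b : G, exists a : G, w a = b].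

Section LE.
Context {R : realType} (dX : measure_display) (X : measurableType dX)
  (G : topologicalZmodType) (m : {measure set X -> \bar R})
  (mG : {sigma_finite_measure set (borel G) -> \bar R}) (T : X -> X)
  (phi : X -> G).
Local Open Scope ereal_scope.

Definition lifts (S : X -> X) (f : X -> G) (w : G -> G) : Prop :=
  [/\ commutor m T S, measurable_fun setT (f : X -> borel G), surj_cont_endo w &
      commutor (m \x mG) (skew_product T phi : X * borel G -> X * borel G)
        (lift_map S f w)].

Definition in_L (S : X -> X) : Prop := exists f w, lifts S f w.
Definition in_E (w : G -> G) : Prop := exists S f, lifts S f w.
End LE.

From HB Require Import structures.
From mathcomp Require Import all_boot all_order all_algebra.
From mathcomp Require Import all_classical all_reals all_analysis.
Set Implicit Arguments. Unset Strict Implicit. Unset Printing Implicit Defensive.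
Import Order.TTheory GRing.Theory Num.Theory.
Local Open Scope classical_set_scope.
Local Open Scope ring_scope.

(** If [Q(x,y) = (S x, f x + w y)] and [Q'(x,y) = (S x, f' x + w' y)] both
    commute with [T_phi], they share their first coordinate, so the difference
    of their second coordinates, [(f - f') x + (w - w') y], is
    [T_phi]-invariant and hence a.e. constant by ergodicity (a countable basis
    separates the points of the T1 space [G]).  By Fubini it is a.e. constant
    in [y] on some fibre, and since Haar measure charges nonempty open sets the
    continuous map [w - w'] is constant, hence zero.  Thus [w] is a function
    [pi_phi S] of [S]; it is multiplicative because lifts of [S1] and [S2]
    compose to a lift of [S1 \o S2] with endomorphism [w1 \o w2]. *)

Lemma second_countable_seq_basis (T : topologicalType) : @second_countable T ->
  exists e : nat -> set T, (forall n, open (e n)) /\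
    forall (x : T) (A : set T), nbhs x A -> exists n, e n x /\ e n `<=` A.
Proof.
move=> [B cB [Bo Bb]].
have [B0|[e]] := pfcard_geP cB.
  exists (fun=> set0); split => [n|x A /Bb [V [+ _] _]]; first exact: open0.
  by rewrite B0.
exists e; split => [n|x A /Bb [V [BV Vx] VA]]; first exact/Bo/(@funS _ _ _ _ e).
have [n _ eV] := @surj _ _ _ _ e V BV.
by exists n; rewrite eV.
Qed.

Section borel_group.
Variables G H K : topologicalZmodType.

Lemma open_measurable_borel (U : set G) : open U -> measurable (U : set (borel G)).
Proof. exact: sub_sigma_algebra. Qed.

Lemma continuous_measurable_borel (F : G -> H) :
  continuous F -> measurable_fun setT (F : borel G -> borel H).
Proof.
move=> cF; apply: measurability => // _ [U oU <-]; rewrite setTI.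
by apply: open_measurable_borel; apply: open_comp => // x _; exact: cF.
Qed.

Lemma open_measurable_borelX (W : set (G * H)) :
  @second_countable G -> @second_countable H ->
  open W -> measurable (W : set (borel G * borel H)).
Proof.
move=> /second_countable_seq_basis[e [eo eb]].
move=> /second_countable_seq_basis[e' [eo' eb']] oW.
pose box (k : nat * nat) := e k.1 `*` e' k.2.
have -> : W = \bigcup_(k in [set k | box k `<=` W]) box k.
  apply/seteqP; split => [p Wp|p [k /= kW /kW] //].
  have [[A1 A2] [/= nA1 nA2] A12W] := open_nbhs_nbhs (conj oW Wp).
  have [i [ei eiA]] := eb _ _ nA1; have [j [ej ejA]] := eb' _ _ nA2.
  exists (i, j) => //; apply: subset_trans A12W; exact: setSX.
rewrite bigcup_mkcond; apply: countable_bigcupT_measurable => // k.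
by case: ifP => _ //; apply: measurableX; apply: sub_sigma_algebra.
Qed.

Lemma continuous2_measurable_borel (F : G * H -> K) :
  @second_countable G -> @second_countable H ->
  continuous F -> measurable_fun setT (F : borel G * borel H -> borel K).
Proof.
move=> scG scH cF; apply: measurability => // _ [U oU <-]; rewrite setTI.
by apply: open_measurable_borelX => //; apply: open_comp => // p _; exact: cF.
Qed.

End borel_group.

Section borel_group_arith.
Variables (G : topologicalZmodType) (d : measure_display) (Y : measurableType d).
Hypothesis scG : @second_countable G.
Implicit Types a b : Y -> G.

Lemma measurable_funD_borel a b :
  measurable_fun setT (a : Y -> borel G) -> measurable_fun setT (b : Y -> borel G) ->
  measurable_fun setT ((fun y => a y + b y) : Y -> borel G).
Proof.
move=> ma mb.
have mD := continuous2_measurable_borel scG scG (@add_continuous G).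
exact: measurableT_comp mD (measurable_fun_pair ma mb).
Qed.

Lemma measurable_funB_borel a b :
  measurable_fun setT (a : Y -> borel G) -> measurable_fun setT (b : Y -> borel G) ->
  measurable_fun setT ((fun y => a y - b y) : Y -> borel G).
Proof.
move=> ma mb; apply: measurable_funD_borel => //.
exact: measurableT_comp (continuous_measurable_borel (@opp_continuous G)) mb.
Qed.

End borel_group_arith.

Lemma nbhs_basis_separates (T : topologicalType) (e : nat -> set T) (x y : T) :
  accessible_space T ->
  (forall (z : T) (A : set T), nbhs z A -> exists n, e n z /\ e n `<=` A) ->
  (forall n, e n x <-> e n y) -> x = y.
Proof.
move=> aT eb exy; apply: contrapT => /eqP /aT [U [oU]].
rewrite !inE => Ux Uy.
have [n [enx enU]] := eb _ _ (open_nbhs_nbhs (conj oU Ux)).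
by apply/Uy/enU/exy.
Qed.

Section nonsingular.
Context {R : realType} d (Y : measurableType d) (mu : {measure set Y -> \bar R}).
Local Open Scope ereal_scope.
Implicit Types (S : Y -> Y) (A : set Y).

Lemma ae_ex (P : Y -> Prop) : 0 < mu setT -> {ae mu, forall y, P y} -> exists y, P y.
Proof.
by move=> muT; apply: (@filter_ex _ _ (ae_properfilter_algebraOfSetsType muT)).
Qed.

Lemma null_ae_notin A : measurable A -> mu A = 0 -> {ae mu, forall y, ~ A y}.
Proof. by move=> mA A0; exists A; split => // y /= /contrapT. Qed.

Lemma measure_preserving_nonsingular S : measure_preserving mu S -> nonsingular mu S.
Proof. by move=> [mS pS]; split => // A mA; rewrite pS. Qed.

Lemma nonsingular_preimage S A : nonsingular mu S -> measurable A ->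
  measurable (S @^-1` A).
Proof. by move=> [mS _] mA; rewrite -[_ @^-1` _]setTI; exact: mS. Qed.

Lemma nonsingular_ae S (P : Y -> Prop) : nonsingular mu S ->
  {ae mu, forall y, P y} -> {ae mu, forall y, P (S y)}.
Proof.
move=> nS [N [mN N0 PN]]; exists (S @^-1` N); split.
- exact: nonsingular_preimage.
- by case: nS => _ /(_ N mN) ->.
- by move=> y /= nPSy; apply: PN.
Qed.

Lemma nonsingular_comp S1 S2 : nonsingular mu S1 -> nonsingular mu S2 ->
  nonsingular mu (S1 \o S2).
Proof.
move=> nS1 nS2; split; first by apply: measurableT_comp; [case: nS1|case: nS2].
move=> A mA; rewrite comp_preimage.
by case: nS2 => _ ->; [case: nS1 => _ ->|exact: nonsingular_preimage].
Qed.

Lemma nonsingular_iter S n : nonsingular mu S -> nonsingular mu (iter n S).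
Proof.
move=> nS; elim: n => [|n IH]; first by split=> [|A _]; [exact: measurable_id|].
exact: (nonsingular_comp nS IH).
Qed.

Lemma commutor_comp (Rt S1 S2 : Y -> Y) :
  commutor mu Rt S1 -> commutor mu Rt S2 -> commutor mu Rt (S1 \o S2).
Proof.
move=> [nS1 c1] [nS2 c2]; split; first exact: nonsingular_comp.
by move: c2 (nonsingular_ae nS2 c1); apply: filterS2 => y /= -> ->.
Qed.

End nonsingular.

Section ergodic_invariant.
Context {R : realType} d (Y : measurableType d) (mu : {measure set Y -> \bar R})
  (Tp : Y -> Y).
Hypotheses (nTp : nonsingular mu Tp) (eTp : ergodic mu Tp).
Local Open Scope ereal_scope.

Lemma ergodic_ae_invariant_set (A : set Y) : measurable A ->
  {ae mu, forall y, A (Tp y) <-> A y} ->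
  {ae mu, forall y, A y} \/ {ae mu, forall y, ~ A y}.
Proof.
move=> mA Ainv.
have Aiter : {ae mu, forall y n, A (iter n Tp y) <-> A y}.
  apply: ae_foralln => n; elim: n => [|n IH]; first exact: aeW.
  move: IH (nonsingular_ae (nonsingular_iter n nTp) Ainv).
  by apply: filterS2 => y h1 h2; exact: iff_trans h2 h1.
(* The limsup of the orbit's visits to [A] is strictly invariant and a.e. equal to [A]. *)
pose B := [set y | forall k, exists2 n, (k <= n)%N & A (iter n Tp y)].
have mB : measurable B.
  have -> : B = \bigcap_k \bigcup_(n in [set n | (k <= n)%N]) (iter n Tp @^-1` A).
    apply/seteqP; split => y /= yB k.
      by move=> _; have [n kn An] := yB k; exists n.
    by have [n kn An] := yB k I; exists n.
  apply: bigcapT_measurable => k; apply: bigcup_measurable => n _.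
  exact: nonsingular_preimage (nonsingular_iter n nTp) mA.
have BTp : Tp @^-1` B = B.
  apply/seteqP; split => y /= yB k.
    by have [n kn An] := yB k; exists n.+1; [exact: leqW | rewrite iterSr].
  by have [[|n] // kn An] := yB k.+1; exists n => //; rewrite -iterSr.
have BA : {ae mu, forall y, B y <-> A y}.
  apply: filterS Aiter => y hA; split => [/(_ 0%N) [n _ /hA] //|Ay k].
  by exists k => //; apply/hA.
have [B0|BC0] := eTp mB BTp.
- right; move: BA (null_ae_notin mB B0).
  by apply: filterS2 => y BA nBy /BA.
- left; move: BA (null_ae_notin (measurableC mB) BC0).
  by apply: filterS2 => y BA /contrapT /BA.
Qed.

Lemma ergodic_ae_invariant_const (G : topologicalZmodType) (Psi : Y -> G) :
  accessible_space G -> @second_countable G -> 0 < mu setT ->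
  measurable_fun setT (Psi : Y -> borel G) ->
  {ae mu, forall y, Psi (Tp y) = Psi y} -> exists c, {ae mu, forall y, Psi y = c}.
Proof.
move=> aG /second_countable_seq_basis[e [eo eb]] muT mPsi Psi_inv.
pose in_e n := {ae mu, forall y, e n (Psi y)}.
have in_eE n : {ae mu, forall y, e n (Psi y) <-> in_e n}.
  have mE : measurable (Psi @^-1` e n).
    by rewrite -[_ @^-1` _]setTI; apply: mPsi => //; exact: open_measurable_borel.
  have /(ergodic_ae_invariant_set mE) [h|h] :
      {ae mu, forall y, e n (Psi (Tp y)) <-> e n (Psi y)}.
    by apply: filterS Psi_inv => y ->.
  - by apply: filterS (h) => y Ey; split.
  - have not_in_e : ~ in_e n.
      by move=> h'; have [y [/= + Ey]] := ae_ex muT (filterI h h'); apply.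
    by apply: filterS h => y nEy; split => [/nEy|/not_in_e].
have [y0 y0E] := ae_ex muT (ae_foralln in_eE).
exists (Psi y0); apply: filterS (ae_foralln in_eE) => y yE.
by apply: nbhs_basis_separates aG eb _ => n; rewrite yE y0E.
Qed.

End ergodic_invariant.

Section product_measure_sections.
Context {R : realType} d1 d2 (X : measurableType d1) (Y : measurableType d2)
  (m : {measure set X -> \bar R}) (n : {sigma_finite_measure set Y -> \bar R}).
Local Open Scope ereal_scope.

Lemma ae_prod_xsection (P : X * Y -> Prop) : 0 < m setT ->
  {ae m \x n, forall p, P p} -> exists x, {ae n, forall y, P (x, y)}.
Proof.
move=> mT [N [mN N0 PN]].
have xN0 : {ae m, forall x, n (xsection N x) = 0}.
  have mxN := measurable_fun_xsection n mN.
  have : \int[m]_x `|n (xsection N x)| = 0.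
    by rewrite -N0; apply: eq_integral => x _; rewrite gee0_abs.
  by move/(ae_eq_integral_abs m measurableT mxN); apply: filterS => x /(_ I).
have [x xN] := ae_ex mT xN0.
exists x, (xsection N x); split => //; first exact: measurable_xsection.
by move=> y nPxy; apply/xsectionP/PN.
Qed.

End product_measure_sections.

Lemma continuous_ae_cst {R : realType} (G : topologicalZmodType) (H : topologicalType)
    (mG : {measure set (borel G) -> \bar R}) (u : G -> H) (c : H) :
  accessible_space H ->
  (forall U : set G, open U -> U !=set0 -> (0 < mG U)%E) ->
  continuous u -> {ae mG, forall y, u y = c} -> forall y, u y = c.
Proof.
move=> aH mG_open cu [N [mN N0 uN]] y; apply: contrapT => uyc.
pose V := u @^-1` ~` [set c].
have oV : open V.
  apply: open_comp => [z _|]; first exact: cu.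
  exact/closed_openC/accessible_closed_set1.
have V0 : mG V = 0%E.
  by apply: measure_negligible; [exact: open_measurable_borel|exists N].
by have := mG_open V oV (ex_intro _ y uyc); rewrite V0 ltxx.
Qed.

Section skew_product.
Context {R : realType} dX (X : measurableType dX) (G : topologicalZmodType)
  (m : {measure set X -> \bar R}) (mG : {sigma_finite_measure set (borel G) -> \bar R})
  (T : X -> X) (phi : X -> G).
Hypotheses (scG : @second_countable G) (mT : measurable_fun setT T)
  (mphi : measurable_fun setT (phi : X -> borel G)).
Local Notation Tphi := (skew_product T phi : X * borel G -> X * borel G).
Local Open Scope ereal_scope.

Lemma measurable_skew_product : measurable_fun setT Tphi.
Proof.
apply: measurable_fun_pair; first exact: measurableT_comp mT measurable_fst.
apply: (measurable_funD_borel scG (a := fun p : X * borel G => phi p.1)) => //.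
exact: measurableT_comp mphi measurable_fst.
Qed.

Lemma xsection_skew_product_preimage (A : set (X * borel G)) x :
  xsection (Tphi @^-1` A) x = [set (- phi x + a)%R | a in xsection A (T x)].
Proof.
apply/seteqP; split => y.
  by move=> /xsectionP Ay; exists (phi x + y)%R; [exact/xsectionP|rewrite addKr].
by move=> [a /xsectionP Aa <-]; apply/xsectionP; rewrite /skew_product /= addNKr.
Qed.

Lemma measure_preserving_skew_product :
  (forall (g : G) (A : set (borel G)), measurable A ->
     mG [set (g + a)%R | a in A] = mG A) ->
  (forall A, measurable A -> m (T @^-1` A) = m A) ->
  measure_preserving (m \x mG) Tphi.
Proof.
move=> mG_inv mT_inv; split => [|A mA]; first exact: measurable_skew_product.
have mxA := measurable_fun_xsection mG mA.
transitivity (\int[m]_x (mG \o xsection A) (T x)).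
  apply: eq_integral => x _ /=.
  by rewrite xsection_skew_product_preimage mG_inv //; exact: measurable_xsection.
transitivity (\int[pushforward m T]_x (mG \o xsection A) x).
  by rewrite (ge0_integral_pushforward mT m measurableT).
by apply: eq_measure_integral => B mB _; exact: mT_inv.
Qed.

End skew_product.

Lemma morphD_eq0 (G : zmodType) (w : G -> G) : {morph w : a b / a + b} -> w 0 = 0.
Proof. by move=> wD; apply: (@addrI _ (w 0)); rewrite -wD !addr0. Qed.

Lemma continuousB_zmod (T : topologicalType) (G : topologicalZmodType) (a b : T -> G) :
  continuous a -> continuous b -> continuous (fun t => a t - b t).
Proof.
move=> ca cb t.
apply: (@continuous_comp _ _ _ (fun t => (a t, b t)) (fun q : G * G => q.1 - q.2)).
  by apply: cvg_pair; [exact: ca|exact: cb].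
exact: sub_continuous.
Qed.

Lemma surj_cont_endo_comp (G : topologicalZmodType) (w1 w2 : G -> G) :
  surj_cont_endo w1 -> surj_cont_endo w2 -> surj_cont_endo (w1 \o w2).
Proof.
move=> [D1 c1 s1] [D2 c2 s2]; split.
- by move=> a b /=; rewrite D2 D1.
- by move=> x; apply: continuous_comp; [exact: c2|exact: c1].
- by move=> b; have [a1 <-] := s1 b; have [a <-] := s2 a1; exists a.
Qed.

Lemma lift_map_comp (X : Type) (G : zmodType) (S1 S2 : X -> X) (f1 f2 : X -> G)
    (w1 w2 : G -> G) : {morph w1 : a b / a + b} ->
  lift_map S1 f1 w1 \o lift_map S2 f2 w2 =
  lift_map (S1 \o S2) (fun x => f1 (S2 x) + w1 (f2 x)) (w1 \o w2).
Proof. by move=> w1D; apply/funext => -[x y]; rewrite /lift_map /= w1D addrA. Qed.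

Section lifts.
Context {R : realType} dX (X : measurableType dX) (G : topologicalZmodType)
  (m : {measure set X -> \bar R}) (mG : {sigma_finite_measure set (borel G) -> \bar R})
  (T : X -> X) (phi : X -> G).
Hypothesis scG : @second_countable G.
Local Notation lifts := (lifts m mG T phi).
Local Notation Tphi := (skew_product T phi : X * borel G -> X * borel G).

Lemma measurable_lift_map_snd S f w :
  measurable_fun setT (f : X -> borel G) -> continuous w ->
  measurable_fun setT ((fun p => (lift_map S f w p).2) : X * borel G -> borel G).
Proof.
move=> mf cw; apply: measurable_funD_borel => //.
  exact: measurableT_comp mf measurable_fst.
exact: measurableT_comp (continuous_measurable_borel cw) measurable_snd.
Qed.

Lemma lifts_comp S1 f1 w1 S2 f2 w2 : lifts S1 f1 w1 -> lifts S2 f2 w2 ->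
  lifts (S1 \o S2) (fun x => f1 (S2 x) + w1 (f2 x)) (w1 \o w2).
Proof.
move=> [cS1 mf1 e1 cQ1] [cS2 mf2 e2 cQ2]; split.
- exact: commutor_comp.
- apply: measurable_funD_borel => //.
    by apply: measurableT_comp mf1 _; case: cS2 => [[]].
  by apply: measurableT_comp mf2; apply: continuous_measurable_borel; case: e1.
- exact: surj_cont_endo_comp.
- by case: e1 => w1D _ _; rewrite -lift_map_comp //; exact: commutor_comp.
Qed.

(* [id] is a junk value for [S] outside [L_phi]. *)
Definition lift_endo (S : X -> X) : G -> G :=
  if pselect (exists w f, lifts S f w) is left h then projT1 (cid h) else id.

Local Open Scope ereal_scope.
Hypotheses (aG : accessible_space G)
  (mG_inv : forall (g : G) (A : set (borel G)), measurable A ->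
     mG [set (g + a)%R | a in A] = mG A)
  (mG_open : forall U : set G, open U -> U !=set0 -> 0 < mG U)
  (mT : measure_preserving m T) (mphi : measurable_fun setT (phi : X -> borel G))
  (m_gt0 : 0 < m setT) (eTphi : ergodic (m \x mG) Tphi).

Lemma product_measure_setT_gt0 : 0 < (m \x mG) setT.
Proof.
rewrite -setXTT product_measure1E // mule_gt0 //.
by apply: mG_open; [exact: openT|exists 0%R].
Qed.

Lemma lifts_endo_unique S f w f' w' : lifts S f w -> lifts S f' w' -> w = w'.
Proof.
move=> [_ mf [wD wc _] [_ cQ]] [_ mf' [wD' wc' _] [_ cQ']].
pose Psi p := ((lift_map S f w p).2 - (lift_map S f' w' p).2)%R.
have mPsi : measurable_fun setT (Psi : X * borel G -> borel G).
  by apply: measurable_funB_borel => //; exact: measurable_lift_map_snd.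
have Psi_inv : {ae m \x mG, forall p, Psi (Tphi p) = Psi p}.
  move: cQ cQ'; apply: filterS2 => -[x y] /pair_equal_spec[_ +] /pair_equal_spec[_ +].
  rewrite /Psi /lift_map /skew_product /= => -> ->.
  by rewrite opprD addrACA subrr add0r.
have nTphi : nonsingular (m \x mG) Tphi.
  apply: measure_preserving_nonsingular; apply: measure_preserving_skew_product => //.
  - by case: mT.
  - by case: mT => _; exact.
have [c Psi_c] := ergodic_ae_invariant_const nTphi eTphi aG scG
  product_measure_setT_gt0 mPsi Psi_inv.
have [x0 x0_c] := ae_prod_xsection m_gt0 Psi_c.
have u_cst y : (w y - w' y = - (f x0 - f' x0) + c)%R.
  apply: (continuous_ae_cst aG mG_open (continuousB_zmod wc wc') _ y).
  have Psi_x0 z : Psi (x0, z) = (f x0 - f' x0 + (w z - w' z))%R.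
    by rewrite /Psi /= opprD addrACA.
  by move: x0_c; apply: filterS => z; rewrite Psi_x0 => <-; rewrite addKr.
apply/funext => y; apply/eqP; rewrite -subr_eq0; apply/eqP.
by rewrite u_cst -(u_cst 0%R) (morphD_eq0 wD) (morphD_eq0 wD') subr0.
Qed.

Lemma lift_endoP S f w : lifts S f w -> lift_endo S = w.
Proof.
move=> l; rewrite /lift_endo; case: pselect => [h|[]]; last by exists w, f.
by case: cid => w0 [f0 l0] /=; exact: lifts_endo_unique l0 l.
Qed.

End lifts.

Theorem mainTheorem6 (R : realType) (dX : measure_display) (X : measurableType dX)
  (m : probability X R) (G : topologicalZmodType)
  (mG : {sigma_finite_measure set (borel G) -> \bar R}) (T : X -> X) (phi : X -> G) :
  hausdorff_space G -> locally_compact [set: G] -> @second_countable G ->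
  haar_measure mG ->
  measure_preserving m T -> ergodic m T ->
  measurable_fun setT (phi : X -> borel G) ->
  ergodic (m \x mG)%E (skew_product T phi : X * borel G -> X * borel G) ->
  exists pi : (X -> X) -> (G -> G),
    [/\ (forall S, in_L m mG T phi S -> in_E m mG T phi (pi S)),
        (forall w, in_E m mG T phi w -> exists2 S, in_L m mG T phi S & pi S = w),
        (forall S1 S2, in_L m mG T phi S1 -> in_L m mG T phi S2 ->
           pi (S1 \o S2) = pi S1 \o pi S2) &
        (forall S f w, lifts m mG T phi S f w -> w = pi S)].
Proof.
move=> /hausdorff_accessible aG _ scG [mG_inv _ mG_open] mT _ mphi eTphi.
have m_gt0 : (0 < m setT)%E by rewrite probability_setT lte01.
have piP := lift_endoP scG aG mG_inv mG_open mT mphi m_gt0 eTphi.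
exists (lift_endo m mG T phi); split.
- by move=> S [f [w l]]; exists S, f; rewrite (piP _ _ _ l).
- by move=> w [S [f l]]; exists S; [exists f, w|exact: piP l].
- move=> S1 S2 [f1 [w1 l1]] [f2 [w2 l2]].
  by rewrite (piP _ _ _ (lifts_comp scG l1 l2)) (piP _ _ _ l1) (piP _ _ _ l2).
- by move=> S f w l; rewrite (piP _ _ _ l).
Qed.
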